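(* Let $q=p^n$ with $p$ prime, $m\ge1$, and $r=t(q-1)+s$ with integers $t\ge0$, $0\le s\le q-2$, and $r<m(q-1)$. If $f$ is a nonzero codeword of $R_q(r,m)$ of minimal weight $(q-s)q^{m-t-1}$, then its support $S_f$ is contained in an affine subspace of $\mathbb{F}_q^m$ of codimension $t$.
   Context: $B_m^q=\mathbb{F}_q[X_1,\dots,X_m]/(X_1^q-X_1,\dots,X_m^q-X_m)$ is identified with the algebra of functions $\mathbb{F}_q^m\to\mathbb{F}_q$. For $f\in B_m^q$, $S_f=\{x : f(x)\neq0\}$ and $|f|=\mathrm{Card}(S_f)$. The degree of $P\in B_m^q$ is the total degree of its representative of degree at most $q-1$ in each variable, and $R_q(r,m)=\{P\in B_m^q:\deg P\le r\}$. The minimum weight of a nonzero codeword of $R_q(r,m)$, for $r=t(q-1)+s$, $0\le s\le q-2$, $r<m(q-1)$, is $(q-s)q^{m-t-1}$. *)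

From HB Require Import structures.
From mathcomp Require Import all_boot all_order all_algebra all_field.
Set Implicit Arguments. Unset Strict Implicit. Unset Printing Implicit Defensive.
Import GRing.Theory.
Local Open Scope ring_scope.

(* Points of F^m are row vectors 'rV[F]_m; elements of B_m^q are functions
   'rV[F]_m -> F (with q = #|F|). *)

Definition rexp (F : finFieldType) (m : nat) := {ffun 'I_m -> 'I_#|F|}.

Definition tdeg (F : finFieldType) (m : nat) (e : rexp F m) : nat :=
  (\sum_(i < m) (e i : nat))%N.

Definition monom (F : finFieldType) (m : nat) (e : rexp F m) (x : 'rV[F]_m) : F :=
  \prod_(i < m) x 0 i ^+ e i.

(* f belongs to R_q(r,m): its (unique) representative of degree <= q-1 in
   each variable has total degree <= r, i.e. f is an F-linear combination
   of reduced monomials of total degree <= r. *)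
Definition in_RM (F : finFieldType) (r m : nat) (f : 'rV[F]_m -> F) : Prop :=
  exists c : rexp F m -> F,
    forall x, f x = \sum_(e : rexp F m | (tdeg e <= r)%N) c e * monom e x.

Definition supp (F : finFieldType) (m : nat) (f : 'rV[F]_m -> F) : {set 'rV[F]_m} :=
  [set x | f x != 0].

Definition weight (F : finFieldType) (m : nat) (f : 'rV[F]_m -> F) : nat :=
  #|supp f|.

Definition in_affine_codim (F : finFieldType) (m k : nat) (S : {set 'rV[F]_m}) : Prop :=
  exists (a : 'rV[F]_m) (V : 'M[F]_m),
    \rank V = (m - k)%N /\ forall x, x \in S -> (x - a <= V)%MS.

From HB Require Import structures.
From mathcomp Require Import all_boot all_order all_algebra all_field.
From mathcomp Require Import zify.
Set Implicit Arguments. Unset Strict Implicit. Unset Printing Implicit Defensive.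

(* Expand f in the first coordinate, f (y, x) = sum_i g_i(x) y^i with
   deg g_i <= r - i, and let k be the largest index with g_k <> 0. Over each x in S_{g_k},
   y |-> f (y, x) is a nonzero polynomial of degree k, with at least q - k nonzeros, so
   |f| >= (q - k) |g_k| >= (q - k) W(r - k, m - 1) >= W(r, m), with W = min_weight q.
   If |f| = W(r, m), every inequality is an equality. After a linear change of coordinates
   putting two points of S_f on one line y |-> (y, x) (which rules out k = q - 1), this
   forces k <= s, |g_k| = W(r - k, m - 1) and S_f to lie over S_{g_k}; as
   (r - k) %/ (q - 1) = t, induction puts S_{g_k}, hence S_f, in an affine subspace of
   codimension t. *)

(* For r >= m (q - 1) the code contains the indicator of a point, hence weight 1. *)
Definition min_weight (q m r : nat) : nat :=
  if r < m * q.-1 then (q - r %% q.-1) * q ^ (m - r %/ q.-1 - 1) else 1.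

Section MinWeight.
Variable Q : nat.
Hypothesis Q_gt0 : 0 < Q.
Local Notation q := Q.+1.
Local Notation min_weight := (min_weight q).

Lemma min_weight_divmod m t s : s < Q ->
  min_weight m (t * Q + s) = if t < m then (q - s) * q ^ (m - t - 1) else 1.
Proof.
move=> sQ; rewrite /min_weight divnMDl // divn_small // modnMDl modn_small //.
by rewrite addn0 -(ltn_pmul2r Q_gt0); congr (if _ then _ else _); apply/idP/idP; nia.
Qed.

Lemma min_weight_gt0 m r : 0 < min_weight m r.
Proof.
rewrite /min_weight; case: ifP => // _.
by rewrite muln_gt0 expn_gt0 /= subn_gt0 ltnS ltnW // ltn_mod.
Qed.

Lemma min_weight_gt1 m r : r < m * Q -> 1 < min_weight m r.
Proof.
move=> rm; rewrite /min_weight rm; have := ltn_mod r Q; rewrite Q_gt0.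
have := expn_gt0 q (m - r %/ Q - 1); rewrite /=; nia.
Qed.

Lemma divn_subn_mod r k : k <= r %% Q -> (r - k) %/ Q = r %/ Q.
Proof.
move=> kr; rewrite {1}(divn_eq r Q) -addnBA // divnMDl // [(_ - k) %/ Q]divn_small.
  by rewrite addn0.
by have := ltn_mod r Q; rewrite Q_gt0; lia.
Qed.

Lemma min_weight_subQ m r : Q <= r -> min_weight m (r - Q) = min_weight m.+1 r.
Proof.
move=> Qr; have sQ := ltn_mod (r - Q) Q; rewrite Q_gt0 in sQ.
have Er : r = ((r - Q) %/ Q).+1 * Q + (r - Q) %% Q.
  by rewrite mulSn -addnA -divn_eq subnKC.
by rewrite {2}Er {1}(divn_eq (r - Q) Q) !min_weight_divmod // ltnS.
Qed.

Lemma min_weight_le_nocarry m r k : k <= r %% Q ->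
  min_weight m.+1 r <= (q - k) * min_weight m (r - k).
Proof.
move=> ks; case: (ltnP r (m.+1 * Q)) => rm; last first.
  by rewrite /min_weight ltnNge rm /= muln_gt0 subn_gt0 min_weight_gt0 ltnS
             (leq_trans ks) // ltnW // ltn_mod.
have sQ := ltn_mod r Q; rewrite Q_gt0 in sQ.
rewrite (divn_eq r Q) in rm *; rewrite -addnBA //.
move: (r %/ Q) (r %% Q) ks rm sQ => t s ks rm sQ.
have tm : t <= m by nia.
rewrite !min_weight_divmod ?ltnS ?tm //; last by lia.
have [tm'|mt] := ltnP t m; last first.
  have -> : t = m by lia.
  have -> : m.+1 - m - 1 = 0 by lia.
  by rewrite expn0 muln1; lia.
rewrite (_ : m.+1 - t - 1 = (m - t - 1).+1) ?expnS; last by lia.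
rewrite mulnA [X in _ <= X]mulnA leq_mul2r; apply/orP; right; nia.
Qed.

Lemma min_weight_lt_carry m r k : r %% Q < k < Q -> k <= r -> r < m.+1 * Q ->
  min_weight m.+1 r < (q - k) * min_weight m (r - k).
Proof.
move=> /andP[sk kQ] kr rm; have sQ := ltn_mod r Q; rewrite Q_gt0 in sQ.
rewrite (divn_eq r Q) in kr rm *.
move: (r %/ Q) (r %% Q) sk kr rm sQ => t s sk kr rm sQ.
have t0 : 0 < t by nia.
rewrite (_ : t * Q + s - k = t.-1 * Q + (Q + s - k)); last by nia.
rewrite !min_weight_divmod; try lia.
have -> : m.+1 - t - 1 = m - t.-1 - 1 by lia.
have tm : t < m.+1 by nia.
rewrite tm (_ : t.-1 < m); last by lia.
rewrite mulnA ltn_mul2r expn_gt0 /=; nia.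
Qed.

Lemma min_weight_rec m r k : k < q -> k <= r ->
  min_weight m.+1 r <= (q - k) * min_weight m (r - k).
Proof.
move=> kq kr; have [ks|sk] := leqP k (r %% Q); first exact: min_weight_le_nocarry.
have [rm|mr] := ltnP r (m.+1 * Q); last first.
  by rewrite /min_weight ltnNge mr /= muln_gt0 subn_gt0 kq min_weight_gt0.
have [kQ|] := ltnP k Q; first by rewrite ltnW // min_weight_lt_carry ?sk.
move=> Qk; have kQ : k = Q by apply/eqP; rewrite eqn_leq Qk -ltnS kq.
by rewrite kQ subSnn mul1n min_weight_subQ // -kQ.
Qed.
End MinWeight.

Import GRing.Theory.
Local Open Scope ring_scope.

Section ReedMuller.
Variable F : finFieldType.
Local Notation q := #|F|.

Lemma card_predK : q.-1.+1 = q.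
Proof. exact: ltn_predK (card_finNzRing_gt1 F). Qed.

Lemma card_pred_gt0 : (0 < q.-1)%N.
Proof. by rewrite -ltnS card_predK card_finNzRing_gt1. Qed.

Section Closure.
Variables (m r : nat).

Lemma in_RM_eq (f g : 'rV[F]_m -> F) : in_RM r f -> f =1 g -> in_RM r g.
Proof. by case=> c fE fg; exists c => x; rewrite -fg. Qed.

Lemma in_RM0 : in_RM r (fun _ : 'rV[F]_m => 0).
Proof. by exists (fun _ => 0) => x; rewrite big1 // => e _; rewrite mul0r. Qed.

Lemma in_RMD (f g : 'rV[F]_m -> F) :
  in_RM r f -> in_RM r g -> in_RM r (fun x => f x + g x).
Proof.
case=> c fE [d gE]; exists (fun e => c e + d e) => x.
by rewrite fE gE -big_split; apply: eq_bigr => e _; rewrite mulrDl.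
Qed.

Lemma in_RMZ a (f : 'rV[F]_m -> F) : in_RM r f -> in_RM r (fun x => a * f x).
Proof.
case=> c fE; exists (fun e => a * c e) => x.
by rewrite fE mulr_sumr; apply: eq_bigr => e _; rewrite mulrA.
Qed.

Lemma in_RM_sum (I : Type) (s : seq I) (P : pred I) (h : I -> 'rV[F]_m -> F) :
  (forall i, P i -> in_RM r (h i)) ->
  in_RM r (fun x => \sum_(i <- s | P i) h i x).
Proof.
move=> hRM; elim: s => [|i s IHs].
  by apply: in_RM_eq in_RM0 _ => x; rewrite big_nil.
have [Pi|nPi] := boolP (P i); last by apply: in_RM_eq IHs _ => x; rewrite big_cons (negPf nPi).
by apply: in_RM_eq (in_RMD (hRM i Pi) IHs) _ => x; rewrite big_cons Pi.
Qed.

Lemma in_RM_le r' (f : 'rV[F]_m -> F) : (r <= r')%N -> in_RM r f -> in_RM r' f.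
Proof.
move=> rr' [c fE]; exists (fun e => if (tdeg e <= r)%N then c e else 0) => x.
rewrite fE [RHS]big_mkcond [LHS]big_mkcond; apply: eq_bigr => e _.
have [er|_] := boolP (tdeg e <= r)%N; first by rewrite (leq_trans er rr').
by case: ifP; rewrite ?mul0r.
Qed.

End Closure.

(* As x ^+ q = x, a positive exponent may be reduced modulo q - 1 into [1, q - 1]. *)
Definition reduce_exp (n : nat) : nat := if n is k.+1 then (k %% q.-1).+1 else 0.

Lemma reduce_exp_lt n : (reduce_exp n < q)%N.
Proof.
case: n => [|k] /=; first by rewrite (ltn_trans _ (card_finNzRing_gt1 F)).
by rewrite -card_predK ltnS ltn_mod card_pred_gt0.
Qed.

Lemma reduce_exp_le n : (reduce_exp n <= n)%N.
Proof. by case: n => //= k; rewrite ltnS leq_mod. Qed.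

Lemma expr_reduce_exp (x : F) n : x ^+ reduce_exp n = x ^+ n.
Proof.
case: n => //= k; rewrite {2}(divn_eq k q.-1) -addnS.
elim: (k %/ q.-1)%N => [|a IHa]; first by rewrite add0n.
rewrite mulSn -addnA exprD -IHa -exprD addnS -addSn card_predK.
by rewrite exprD expf_card -exprS.
Qed.

Definition nat_monom m (n : 'I_m -> nat) (x : 'rV[F]_m) : F := \prod_(i < m) x 0 i ^+ n i.

Lemma in_RM_nat_monom m r (n : 'I_m -> nat) :
  (\sum_(i < m) n i <= r)%N -> in_RM r (nat_monom n).
Proof.
move=> nr; pose e : rexp F m := [ffun i => Ordinal (reduce_exp_lt (n i))].
exists (fun e' => (e' == e)%:R) => x.
rewrite (bigD1 e) /=; last first.
  by rewrite (leq_trans _ nr) // leq_sum // => i _; rewrite ffunE reduce_exp_le.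
rewrite eqxx mul1r big1 ?addr0 => [|e' /andP[_ /negPf->]]; last by rewrite mul0r.
by apply: eq_bigr => i _; rewrite ffunE expr_reduce_exp.
Qed.

Lemma in_RMM m a b (f g : 'rV[F]_m -> F) :
  in_RM a f -> in_RM b g -> in_RM (a + b) (fun x => f x * g x).
Proof.
case=> c fE [d gE].
have fgRM : in_RM (a + b) (fun x => \sum_(e : rexp F m | (tdeg e <= a)%N)
    \sum_(e' : rexp F m | (tdeg e' <= b)%N) c e * d e' * nat_monom (fun i => e i + e' i)%N x).
  do 2![apply: in_RM_sum => ? ?]; apply: in_RMZ; apply: in_RM_nat_monom.
  by rewrite big_split leq_add.
apply: in_RM_eq fgRM _ => x; rewrite fE gE mulr_suml; apply: eq_bigr => e _.
rewrite mulr_sumr; apply: eq_bigr => e' _; rewrite mulrACA /nat_monom -big_split.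
by congr (_ * _); apply: eq_bigr => i _; rewrite exprD.
Qed.

Lemma in_RM1 m : in_RM 0 (fun _ : 'rV[F]_m => 1).
Proof.
apply: in_RM_eq (@in_RM_nat_monom m 0 (fun _ => 0%N) _) _ => [|x].
  by rewrite big1.
by rewrite /nat_monom big1.
Qed.

Lemma in_RMX m a k (f : 'rV[F]_m -> F) : in_RM a f -> in_RM (a * k) (fun x => f x ^+ k).
Proof.
move=> fRM; elim: k => [|k IHk]; first by rewrite muln0; apply: in_RM_eq (in_RM1 m) _.
by rewrite mulnS; apply: in_RM_eq (in_RMM fRM IHk) _ => x; rewrite exprS.
Qed.

Lemma in_RM_prod m (I : Type) (s : seq I) (n : I -> nat) (h : I -> 'rV[F]_m -> F) :
  (forall i, in_RM (n i) (h i)) ->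
  in_RM (\sum_(i <- s) n i) (fun x => \prod_(i <- s) h i x).
Proof.
move=> hRM; elim: s => [|i s IHs].
  by rewrite big_nil; apply: in_RM_eq (in_RM1 m) _ => x; rewrite big_nil.
by rewrite big_cons; apply: in_RM_eq (in_RMM (hRM i) IHs) _ => x; rewrite big_cons.
Qed.

Lemma in_RM_coord m (i : 'I_m) : in_RM 1 (fun x : 'rV[F]_m => x 0 i).
Proof.
apply: in_RM_eq (@in_RM_nat_monom m 1 (fun j => (j == i) : nat) _) _ => [|x].
  by rewrite (bigD1 i) //= eqxx big1 // => j /negPf->.
by rewrite /nat_monom (bigD1 i) //= eqxx expr1 big1 ?mulr1 // => j /negPf->.
Qed.

Lemma in_RM_mulmx m m' r (M : 'M[F]_(m, m')) (f : 'rV[F]_m' -> F) :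
  in_RM r f -> in_RM r (fun x => f (x *m M)).
Proof.
case=> c fE.
have coordRM i : in_RM 1 (fun x : 'rV[F]_m => (x *m M) 0 i).
  have := in_RM_sum (index_enum 'I_m) (P := xpredT) (fun l _ => in_RMZ (M l i) (in_RM_coord l)).
  by move/in_RM_eq; apply=> x; rewrite mxE; apply: eq_bigr => l _; rewrite mulrC.
have monomRM e : in_RM (tdeg e) (fun x => monom e (x *m M)).
  have := in_RM_prod (index_enum 'I_m') (fun i => in_RMX (e i) (coordRM i)).
  by under eq_bigr do rewrite mul1n.
have := in_RM_sum (index_enum (rexp F m')) (P := fun e => (tdeg e <= r)%N)
  (fun e er => in_RMZ (c e) (in_RM_le er (monomRM e))).
by move/in_RM_eq; apply=> x; rewrite fE.
Qed.
End ReedMuller.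

Section FirstCoordinate.
Variables (F : finFieldType) (m : nat).
Local Notation q := #|F|.

Definition row_cons (y : F) (x : 'rV[F]_m) : 'rV[F]_m.+1 :=
  \row_i oapp (fun l => x 0 l) y (unlift ord0 i).

Definition row_behead (z : 'rV[F]_m.+1) : 'rV[F]_m := \row_l z 0 (lift ord0 l).

Lemma row_cons0 y x : row_cons y x 0 ord0 = y.
Proof. by rewrite mxE unlift_none. Qed.

Lemma row_cons_lift y x l : row_cons y x 0 (lift ord0 l) = x 0 l.
Proof. by rewrite mxE liftK. Qed.

Lemma row_beheadK y x : row_behead (row_cons y x) = x.
Proof. by apply/rowP => l; rewrite mxE row_cons_lift. Qed.

Lemma row_consK (z : 'rV[F]_m.+1) : row_cons (z 0 ord0) (row_behead z) = z.
Proof. by apply/rowP => i; rewrite mxE; case: unliftP => [l ->|->] //=; rewrite mxE. Qed.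

Lemma row_behead_rsubmx (z : 'rV[F]_m.+1) : row_behead z = rsubmx (z : 'rV_(1 + m)).
Proof. by apply/rowP => l; rewrite !mxE; congr (z 0 _); apply: val_inj. Qed.

Lemma in_RM_expand r (f : 'rV[F]_m.+1 -> F) : in_RM r f ->
  exists g : nat -> 'rV[F]_m -> F,
    [/\ forall i, (i <= r)%N -> in_RM (r - i) (g i),
        forall i x, (r < i)%N -> g i x = 0 &
        forall y x, f (row_cons y x) = \sum_(i < q) g i x * y ^+ i].
Proof.
case=> c fE.
have tdeg_cons (e : rexp F m.+1) : tdeg e = (e ord0 + \sum_(l < m) e (lift ord0 l))%N.
  by rewrite /tdeg big_ord_recl.
pose g i x := \sum_(e : rexp F m.+1 | (tdeg e <= r)%N && (e ord0 == i :> nat))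
                c e * nat_monom (fun l => e (lift ord0 l) : nat) x.
exists g; split.
- move=> i ir; apply: in_RM_sum => e /andP[er /eqP ei]; apply: in_RMZ.
  by apply: in_RM_nat_monom; rewrite leq_subRL // -ei -tdeg_cons.
- move=> i x ri; rewrite /g big1 // => e /andP[+ /eqP ei].
  by rewrite tdeg_cons ei leqNgt (leq_trans ri) ?leq_addr.
- move=> y x; rewrite fE (partition_big (fun e : rexp F m.+1 => e ord0) xpredT) //=.
  apply: eq_bigr => i _; rewrite /g mulr_suml; apply: eq_bigr => e /andP[_ /eqP ei].
  rewrite /monom big_ord_recl row_cons0 ei mulrCA mulrA [_ * y ^+ i]mulrC -mulrA.
  by congr (_ * (_ * _)); apply: eq_bigr => l _; rewrite row_cons_lift.
Qed.

Lemma weight_row_cons (f : 'rV[F]_m.+1 -> F) :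
  weight f = (\sum_(x : 'rV[F]_m) #|[set y | f (row_cons y x) != 0%R]|)%N.
Proof.
rewrite /weight /supp -sum1_card.
rewrite (reindex (fun p : F * 'rV[F]_m => row_cons p.1 p.2)) /=; last first.
  exists (fun z : 'rV_m.+1 => (z 0 ord0, row_behead z)) => [[y x] _|z _] /=.
    by rewrite row_cons0 row_beheadK.
  by rewrite row_consK.
rewrite -(pair_big_dep xpredT (fun y x => row_cons y x \in [set z | f z != 0]) (fun _ _ => 1%N)).
rewrite (exchange_big_dep xpredT) //=; apply: eq_bigr => x _.
by rewrite -sum1_card; apply: eq_bigl => y; rewrite !inE.
Qed.

End FirstCoordinate.

Lemma card_nonroots_poly (F : finFieldType) (p : {poly F}) : p != 0 ->
  (#|F| - (size p).-1 <= #|[set y | ~~ root p y]|)%N.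
Proof.
move=> p0; have rootsp : (#|[set y | root p y]| <= (size p).-1)%N.
  rewrite -ltnS prednK ?size_poly_gt0 // cardE.
  apply: (max_poly_roots p0 _ (enum_uniq _)).
  by apply/allP => y; rewrite mem_enum inE.
have -> : [set y | ~~ root p y] = ~: [set y | root p y] by apply/setP => y; rewrite !inE.
by rewrite leq_subLR -(cardsC [set y | root p y]) leq_add2r.
Qed.

Lemma ltn_sum_ptwise (T : finType) (u v : T -> nat) x0 :
  (forall x, u x <= v x)%N -> (u x0 < v x0)%N -> (\sum_x u x < \sum_x v x)%N.
Proof.
move=> uv uv0; rewrite (bigD1 x0) // [X in (_ < X)%N](bigD1 x0) //=.
by rewrite -addSn leq_add // leq_sum.
Qed.

Section TopCoefficient.
Variables (F : finFieldType) (m : nat) (f : 'rV[F]_m.+1 -> F).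
Variables (g : nat -> 'rV[F]_m -> F) (k : nat).
Local Notation q := #|F|.
Hypothesis f_expand : forall y x, f (row_cons y x) = \sum_(i < q) g i x * y ^+ i.
Hypothesis k_lt_q : (k < q)%N.
Hypothesis g_top : forall i x, (k < i < q)%N -> g i x = 0.

Let fiber x := [set y | f (row_cons y x) != 0].
Let top_count x := if x \in supp (g k) then (q - k)%N else 0%N.

Lemma top_count_le_fiber x : (top_count x <= #|fiber x|)%N.
Proof.
rewrite /top_count inE; case: ifP => // gkx.
pose p := \poly_(i < k.+1) g i x.
have sizep : size p = k.+1 by rewrite size_poly_eq.
have pE y : p.[y] = \sum_(i < q) g i x * y ^+ i.
  rewrite horner_poly (big_ord_widen q (fun i => g i x * y ^+ i) k_lt_q) big_mkcond.
  apply: eq_bigr => i _; case: ltnP => // ki.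
  by rewrite g_top ?mul0r // ltn_ord ki.
have -> : fiber x = [set y | ~~ root p y] by apply/setP => y; rewrite !inE f_expand /root pE.
have p0 : p != 0 by rewrite -size_poly_eq0 sizep.
by have := card_nonroots_poly p0; rewrite sizep.
Qed.

Lemma sum_top_count : (\sum_x top_count x)%N = ((q - k) * weight (g k))%N.
Proof. by rewrite -big_mkcond sum_nat_const mulnC. Qed.

Lemma weight_top_le : ((q - k) * weight (g k) <= weight f)%N.
Proof.
by rewrite (weight_row_cons f) -sum_top_count leq_sum // => x _; apply: top_count_le_fiber.
Qed.

Lemma weight_top_lt x :
  (top_count x < #|fiber x|)%N -> ((q - k) * weight (g k) < weight f)%N.
Proof.
move=> hx; rewrite (weight_row_cons f) -sum_top_count.
exact: ltn_sum_ptwise top_count_le_fiber hx.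
Qed.

End TopCoefficient.

Section WeightBound.
Variable F : finFieldType.
Local Notation q := #|F|.
Local Notation Q := q.-1.

Lemma exists_top_coef m r (f : 'rV[F]_m.+1 -> F) (g : nat -> 'rV[F]_m -> F) :
  (forall i x, (r < i)%N -> g i x = 0) ->
  (forall y x, f (row_cons y x) = \sum_(i < q) g i x * y ^+ i) ->
  (exists z, f z != 0) ->
  exists k, [/\ (k < q)%N, (k <= r)%N, exists x, g k x != 0 &
                forall i x, (k < i < q)%N -> g i x = 0].
Proof.
move=> g_vanish f_expand [z fz].
have [i gi] : exists i, (i < q)%N && [exists x, g i x != 0].
  have /existsP[i gi] : [exists i : 'I_q, g i (row_behead z) != 0].
    apply: contraR fz => /existsPn g0; rewrite -(row_consK z) f_expand big1 // => i _.
    by rewrite (eqP (negbNE (g0 i))) mul0r.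
  by exists i; rewrite ltn_ord; apply/existsP; exists (row_behead z).
have ub j : (j < q)%N && [exists x, g j x != 0] -> (j <= q)%N by case/andP=> /ltnW.
have [k /andP[kq /existsP[x gkx]] k_max] := ex_maxnP (ex_intro _ i gi) ub.
exists k; split=> //; first by rewrite leqNgt; apply: contra gkx => /g_vanish->.
  by exists x.
move=> j y /andP[kj jq]; apply/eqP; apply: contraTT kj => gjy.
by rewrite -leqNgt k_max // jq; apply/existsP; exists y.
Qed.

Lemma min_weight_le_weight m r (f : 'rV[F]_m -> F) :
  in_RM r f -> (exists x, f x != 0) -> (min_weight q m r <= weight f)%N.
Proof.
elim: m r f => [|m IHm] r f fRM [z fz].
  by rewrite /min_weight mul0n ltn0 card_gt0; apply/set0Pn; exists z; rewrite inE.
have [g [gRM g_vanish f_expand]] := in_RM_expand fRM.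
have [k [kq kr gk0 g_top]] := exists_top_coef g_vanish f_expand (ex_intro _ z fz).
apply: leq_trans (weight_top_le f_expand kq g_top).
have := min_weight_rec (card_pred_gt0 F) m (r := r) (k := k); rewrite card_predK.
move=> /(_ kq kr)/leq_trans; apply.
by rewrite leq_mul2l (IHm _ _ (gRM k kr) gk0) orbT.
Qed.

End WeightBound.

Section TightFibers.
Variables (F : finFieldType) (m r k : nat).
Variables (f : 'rV[F]_m.+1 -> F) (g : nat -> 'rV[F]_m -> F).
Local Notation q := #|F|.
Local Notation Q := q.-1.
Hypothesis f_expand : forall y x, f (row_cons y x) = \sum_(i < q) g i x * y ^+ i.
Hypothesis k_lt_q : (k < q)%N.
Hypothesis g_top : forall i x, (k < i < q)%N -> g i x = 0.
Hypothesis k_le_r : (k <= r)%N.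
Hypothesis gkRM : in_RM (r - k) (g k).
Hypothesis gk_neq0 : exists x, g k x != 0.
Hypothesis f_min : weight f = min_weight q m.+1 r.

Lemma min_weight_le_top : (min_weight q m.+1 r <= (q - k) * weight (g k))%N.
Proof.
have := min_weight_rec (card_pred_gt0 F) m (r := r) (k := k); rewrite card_predK.
move=> /(_ k_lt_q k_le_r)/leq_trans; apply.
by rewrite leq_mul2l min_weight_le_weight ?orbT.
Qed.

Lemma card_fiber_le x :
  (#|[set y | f (row_cons y x) != 0%R]| <= if x \in supp (g k) then q - k else 0)%N.
Proof.
rewrite leqNgt; apply/negP => /(weight_top_lt f_expand k_lt_q g_top).
by rewrite f_min ltnNge min_weight_le_top.
Qed.

Lemma row_behead_supp z : z \in supp f -> row_behead z \in supp (g k).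
Proof.
rewrite inE => fz; have := card_fiber_le (row_behead z); case: ifP => // _.
by rewrite leqn0 cards_eq0 => /eqP/setP/(_ (z 0 ord0)); rewrite !inE row_consK fz.
Qed.

Lemma top_coef_le_mod z1 z2 : (r < m.+1 * Q)%N ->
  z1 != z2 -> row_behead z1 = row_behead z2 -> z1 \in supp f -> z2 \in supp f ->
  (k <= r %% Q)%N.
Proof.
move=> rm z12 behead12; rewrite !inE => fz1 fz2; rewrite leqNgt; apply/negP => rk.
have [kQ|] := ltnP k Q.
  have := min_weight_lt_carry (card_pred_gt0 F) (m := m) (r := r) (k := k).
  rewrite card_predK.
  move=> /(_ (introT andP (conj rk kQ)) k_le_r rm); rewrite -f_min ltnNge.
  have weight_f := weight_top_le f_expand k_lt_q g_top.
  by rewrite (leq_trans _ weight_f) // leq_mul2l min_weight_le_weight ?orbT.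
move=> Qk; have qk1 : (q - k = 1)%N.
  have -> : k = Q by apply/eqP; rewrite eqn_leq Qk -ltnS card_predK k_lt_q.
  by rewrite -{1}card_predK subSnn.
have := card_fiber_le (row_behead z1); rewrite qk1.
have /subset_leq_card :
    [set z1 0 ord0; z2 0 ord0] \subset [set y | f (row_cons y (row_behead z1)) != 0%R].
  apply/subsetP => y; rewrite !inE => /orP[]/eqP->; first by rewrite row_consK.
  by rewrite behead12 row_consK.
rewrite cards2; case: ifP => _ /leq_trans/[apply] //.
case: eqP => // y12; case/negP: z12; apply/eqP.
by rewrite -(row_consK z1) -(row_consK z2) y12 behead12.
Qed.

Lemma weight_top_eq : (k <= r %% Q)%N -> weight (g k) = min_weight q m (r - k).
Proof.
move=> kr; apply/eqP; rewrite eqn_leq min_weight_le_weight // andbT.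
have := weight_top_le f_expand k_lt_q g_top; rewrite f_min => /leq_trans.
have := min_weight_le_nocarry (card_pred_gt0 F) m kr; rewrite card_predK => /[swap]/[apply].
by rewrite leq_pmul2l ?subn_gt0.
Qed.

End TightFibers.

Section AffineSubspaces.
Variable F : finFieldType.

Lemma in_affine_codim_card1 m t (S : {set 'rV[F]_m}) :
  (m <= t)%N -> #|S| = 1%N -> in_affine_codim t S.
Proof.
move=> mt /eqP/cards1P[a ->]; exists a, 0; split.
  by rewrite mxrank0; apply/esym/eqP; rewrite subn_eq0.
by move=> x; rewrite inE => /eqP->; rewrite subrr sub0mx.
Qed.

Lemma in_affine_codim_mulmx m t (S : {set 'rV[F]_m}) (M : 'M[F]_m) :
  M \in unitmx -> in_affine_codim t S -> in_affine_codim t [set x *m M | x in S].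
Proof.
move=> uM [a [V [rkV SV]]]; exists (a *m M), (V *m M); split.
  by rewrite mxrankMfree // row_free_unit.
by move=> _ /imsetP[x xS ->]; rewrite -mulmxBl submxMr // SV.
Qed.

Lemma in_affine_codim_row_cons m t (S' : {set 'rV[F]_m}) (S : {set 'rV[F]_m.+1}) :
  (t <= m)%N -> in_affine_codim t S' ->
  (forall z, z \in S -> row_behead z \in S') -> in_affine_codim t S.
Proof.
move=> tm [a [V [rkV S'V]]] SS'.
exists (row_mx (0 : 'rV_1) a), (block_mx (1%:M : 'M_1) 0 0 V); split.
  have rk1V : \rank (block_mx (1%:M : 'M[F]_1) 0 0 V) = (1 + (m - t))%N.
    by rewrite rank_diag_block_mx mxrank1 rkV.
  by rewrite rk1V add1n subSn.
move=> z /SS' /S'V; rewrite row_behead_rsubmx => /submxP[w zaE].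
set z' : 'rV_(1 + m) := z.
have -> : z' - row_mx 0 a = row_mx (lsubmx z') w *m block_mx (1%:M : 'M_1) 0 0 V.
  rewrite mul_row_block !mulmx0 mulmx1 addr0 add0r -zaE.
  by rewrite -[z' in LHS](hsubmxK z') opp_row_mx add_row_mx oppr0 addr0.
exact: submxMl.
Qed.

(* [b - a] is a nonzero multiple of the first row of [row_ebase (b - a)]. *)
Lemma row_behead_ebase m (a b : 'rV[F]_m.+1) (M := row_ebase (b - a)) :
  row_behead (a *m invmx M) = row_behead (b *m invmx M).
Proof.
have : (b - a) *m invmx M = col_ebase (b - a) *m pid_mx (\rank (b - a)).
  by rewrite -[b - a in LHS]mulmx_ebase mulmxK ?row_ebase_unit.
move/rowP=> baE; apply/rowP => l; have := baE (lift ord0 l).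
by rewrite mulmxBl !mxE big_ord1 !mxE /= mulr0 => /eqP; rewrite subr_eq0 eq_sym => /eqP.
Qed.

End AffineSubspaces.

Section Structure.
Variable F : finFieldType.
Local Notation q := #|F|.
Local Notation Q := q.-1.

Lemma supp_mulmx m (f : 'rV[F]_m -> F) (M : 'M[F]_m) : M \in unitmx ->
  supp f = [set x *m M | x in supp (fun x => f (x *m M))].
Proof.
move=> uM; apply/setP => x; rewrite inE; apply/idP/imsetP => [fx|[y]].
  by exists (x *m invmx M); rewrite ?inE mulmxKV.
by rewrite inE => fy ->.
Qed.

(* The codimension m - r %/ (q - 1) truncates to 0: the support is a single point. *)
Lemma in_affine_codim_min_weight_point m r (f : 'rV[F]_m -> F) :
  (m * Q <= r)%N -> weight f = min_weight q m r -> in_affine_codim (r %/ Q) (supp f).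
Proof.
move=> mr f_min; apply: in_affine_codim_card1; first by rewrite leq_divRL ?card_pred_gt0.
by rewrite -/(weight f) f_min /min_weight ltnNge mr.
Qed.

Lemma in_affine_codim_min_weight m r (f : 'rV[F]_m -> F) :
  in_RM r f -> (exists x, f x != 0) -> weight f = min_weight q m r ->
  in_affine_codim (r %/ Q) (supp f).
Proof.
elim: m r f => [|m IHm] r f fRM f_neq0 f_min.
  by apply: in_affine_codim_min_weight_point f_min; rewrite mul0n.
have [mr|rm] := leqP (m.+1 * Q) r; first exact: in_affine_codim_min_weight_point f_min.
have /card_gt1P[a [b [fa fb ab]]] : (1 < weight f)%N.
  by have := min_weight_gt1 (card_pred_gt0 F) rm; rewrite card_predK f_min.
pose M := row_ebase (b - a); have uM : M \in unitmx by exact: row_ebase_unit.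
pose f' x := f (x *m M).
rewrite (supp_mulmx f uM); apply: (in_affine_codim_mulmx uM).
have f'_min : weight f' = min_weight q m.+1 r.
  by rewrite -f_min /weight (supp_mulmx f uM) card_imset //; apply: can_inj (mulmxK uM).
have f'a : a *m invmx M \in supp f' by rewrite !inE /f' mulmxKV in fa *.
have f'b : b *m invmx M \in supp f' by rewrite !inE /f' mulmxKV in fb *.
have [g [gRM g_vanish f_expand]] := in_RM_expand (in_RM_mulmx M fRM).
have f'_neq0 : exists x, f' x != 0 by exists (a *m invmx M); rewrite inE in f'a.
have [k [kq kr gk0 g_top]] := exists_top_coef g_vanish f_expand f'_neq0.
have a'b' : a *m invmx M != b *m invmx M by apply: contra ab => /eqP/(can_inj (mulmxKV uM))->.
have kr_mod := top_coef_le_mod f_expand kq g_top kr (gRM k kr) gk0 f'_min rm a'b'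
                  (row_behead_ebase a b) f'a f'b.
have over_top := row_behead_supp f_expand kq g_top kr (gRM k kr) gk0 f'_min.
apply: (in_affine_codim_row_cons _ _ over_top).
  by rewrite -ltnS ltn_divLR ?card_pred_gt0.
rewrite -(divn_subn_mod (card_pred_gt0 F) kr_mod); apply: (IHm _ _ (gRM k kr) gk0).
exact: weight_top_eq f_expand kq g_top (gRM k kr) gk0 f'_min kr_mod.
Qed.

End Structure.

Unset Implicit Arguments.

Theorem mainTheorem2 (F : finFieldType) (p n q m t s r : nat)
  (f : 'rV[F]_m -> F) :
  prime p -> #|F| = q -> q = (p ^ n)%N -> (1 <= m)%N ->
  r = (t * (q - 1) + s)%N -> (s <= q - 2)%N -> (r < m * (q - 1))%N ->
  in_RM r f -> (exists x, f x != 0) ->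
  weight f = ((q - s) * q ^ (m - t - 1))%N ->
  in_affine_codim t (supp f).
Proof.
move=> _ Fq _ _ rE s_le r_lt fRM f_neq0 f_min.
have Q_gt0 := card_pred_gt0 F.
have Qq : (#|F|.-1 = q - 1)%N by rewrite Fq subn1.
have sQ : (s < #|F|.-1)%N by rewrite Qq; have := card_finNzRing_gt1 F; lia.
have tm : (t < m)%N by rewrite Qq in Q_gt0; nia.
have <- : (r %/ #|F|.-1 = t)%N by rewrite rE -Qq divnMDl // divn_small ?addn0.
apply: in_affine_codim_min_weight fRM f_neq0 _.
rewrite f_min rE -Qq; have := min_weight_divmod Q_gt0 m t sQ.
by rewrite card_predK tm Fq => ->.
Qed.
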